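(* Let $0\le\underline{s}<\overline{s}\le1$ with $\underline{s}=0$ or $\overline{s}=1$, $p\in(0,1)$, $u,v>0$ with $u\ne v$, with $\mathcal{E}_0\ne\emptyset$, fix $\varepsilon_0>0$ and $n\in\mathbb{N}$, and let $$\underline{\lambda}=\min\Big\{\tfrac{u-\sup C_{\varepsilon_0}}{1+\sup C_{\varepsilon_0}},\tfrac{v+\inf C_{\varepsilon_0}}{1-\inf C_{\varepsilon_0}}\Big\},\qquad \overline{\lambda}=\max\Big\{\tfrac{u-\inf C_{\varepsilon_0}}{1+\inf C_{\varepsilon_0}},\tfrac{v+\sup C_{\varepsilon_0}}{1-\sup C_{\varepsilon_0}}\Big\}.$$ Let $F_n^{[\underline{\lambda},\overline{\lambda}]}$ be the set of $f\in F^\infty_{(\underline{s},\overline{s})}$ for which there is $S\subset C_{\varepsilon_0}$ of Lebesgue measure $m(S)\ge\frac1n$ such that for each $c\in S$, $G_f(\lambda,0)=G_f(\lambda,c)=0$ for some $\lambda\in\mathcal{E}_0\cap\mathcal{E}_c\cap[\underline{\lambda},\overline{\lambda}]$, and let $\overline{F}_n^{[\underline{\lambda},\overline{\lambda}]}$ be its closure in $F^\infty_{(\underline{s},\overline{s})}$ (for the $L_\infty$-norm). If $f\in\overline{F}_n^{[\underline{\lambda},\overline{\lambda}]}$, then there exists $S\subset C_{\varepsilon_0}$ with $m(S)\ge\frac1n$ such that for every $c\in S$ the system $G_f(\lambda,0)=G_f(\lambda,c)=0$ has a solution $\lambda\in\overline{\mathcal{E}}_0\cap\overline{\mathcal{E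}}_c\cap[\underline{\lambda},\overline{\lambda}]$.
   Context: $F^\infty_{(\underline{s},\overline{s})}=\{f\in L_\infty(\underline{s},\overline{s})\cap C^0(\underline{s},\overline{s}): \int_{\underline{s}}^{\overline{s}} f(s)\frac{1-2s}{s}ds=0,\ \int_{\underline{s}}^{\overline{s}} f=1,\ f\ge0,\ f(s)\frac{1-s}{s}\in L_\infty(\underline{s},\overline{s})\}$. For $\lambda>0$, $c\in(-1,u)\cap(-v,1)$: $m(\lambda,c)=\frac{\lambda(1+c)}{\lambda(1+c)+(u-c)}$, $mm(\lambda,c)=\frac{\lambda(1-c)}{\lambda(1-c)+(v+c)}$; $\mathcal{E}_c=\{\lambda>0: m(\lambda,c),mm(\lambda,c)\in(\underline{s},\overline{s})\}$, with closure $\overline{\mathcal{E}}_c$ in $\mathbb{R}$. $C=\{c\in(-1,u)\cap(-v,1):\mathcal{E}_c\ne\emptyset\}\setminus\{0\}$, $C_{\varepsilon_0}=C\cap(-1+\varepsilon_0,u-\varepsilon_0)\cap(-v+\varepsilon_0,1-\varepsilon_0)$. For $\lambda$ with $m(\lambda,c),mm(\lambda,c)\in[\underline{s},\overline{s}]$, $G_f(\lambda,c)=p\int_{\underline{s}}^{m(\lambda,c)} f(s)\frac{1-2s}{s}ds+(1-p)\int_{mm(\lambda,c)}^{\overline{s}} f(s)\frac{1-2s}{s}ds$. *)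

From mathcomp Require Import all_boot all_order all_algebra.
From mathcomp Require Import all_classical all_reals all_analysis.
Set Implicit Arguments. Unset Strict Implicit. Unset Printing Implicit Defensive.
Import Order.TTheory GRing.Theory Num.Theory.
Import numFieldNormedType.Exports.
Local Open Scope classical_set_scope.
Local Open Scope ring_scope.

Section Defs.
Variable R : realType.
Variables (slo shi p u v eps0 : R).

Definition Finf : set (R -> R) := fun f =>
  {within `]slo, shi[, continuous f} /\
  (exists M : R, forall s, slo < s < shi -> `|f s| <= M) /\
  (\int[lebesgue_measure]_(s in `]slo, shi[) (f s * ((1 - 2 * s) / s))%:E = 0)%E /\
  (\int[lebesgue_measure]_(s in `]slo, shi[) (f s)%:E = 1)%E /\
  (forall s, slo < s < shi -> 0 <= f s) /\
  (exists M : R, forall s, slo < s < shi -> `|f s * ((1 - s) / s)| <= M).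

Definition mfun (lam c : R) : R := lam * (1 + c) / (lam * (1 + c) + (u - c)).
Definition mmfun (lam c : R) : R := lam * (1 - c) / (lam * (1 - c) + (v + c)).

Definition Eset (c : R) : set R := fun lam =>
  0 < lam /\ slo < mfun lam c < shi /\ slo < mmfun lam c < shi.

Definition Cset : set R := fun c =>
  -1 < c < u /\ - v < c < 1 /\ Eset c !=set0 /\ c <> 0.

Definition Ceps : set R := fun c =>
  Cset c /\ -1 + eps0 < c < u - eps0 /\ - v + eps0 < c < 1 - eps0.

Definition lam_lo : R :=
  Num.min ((u - sup Ceps) / (1 + sup Ceps)) ((v + inf Ceps) / (1 - inf Ceps)).
Definition lam_hi : R :=
  Num.max ((u - inf Ceps) / (1 + inf Ceps)) ((v + sup Ceps) / (1 - sup Ceps)).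

Definition Gf (f : R -> R) (lam c : R) : \bar R :=
  (p%:E * \int[lebesgue_measure]_(s in `[slo, mfun lam c]) (f s * ((1 - 2 * s) / s))%:E
   + (1 - p)%:E * \int[lebesgue_measure]_(s in `[mmfun lam c, shi]) (f s * ((1 - 2 * s) / s))%:E)%E.

Definition Fn (n : nat) : set (R -> R) := fun f =>
  Finf f /\
  exists S : set R, measurable S /\ S `<=` Ceps /\
    ((n%:R)^-1%:E <= lebesgue_measure S)%E /\
    forall c, S c -> exists lam, Eset 0 lam /\ Eset c lam /\
      lam_lo <= lam <= lam_hi /\ Gf f lam 0 = 0%E /\ Gf f lam c = 0%E.

Definition Fn_closure (n : nat) : set (R -> R) := fun f =>
  Finf f /\
  forall e : R, 0 < e -> exists g, Fn n g /\
    forall s, slo < s < shi -> `|f s - g s| <= e.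

End Defs.

From Pilot Require Import Defs.
From mathcomp Require Import all_boot all_order all_algebra.
From mathcomp Require Import all_classical all_reals all_analysis.
From mathcomp Require Import ring lra.
From mathcomp Require Import measurable_realfun.
Import Order.TTheory GRing.Theory Num.Theory.
Import numFieldNormedType.Exports.
Local Open Scope classical_set_scope.
Local Open Scope ring_scope.

(* Take g_k in F_n with |f - g_k| <= 1/(k+1) and let S_k be the set of measure
   >= 1/n attached to g_k.  All S_k lie in (-1, 1), so their upper limit S still
   has measure >= 1/n.  A point c of S lies in infinitely many S_k, which yields
   common roots lam_k in [lam_lo, lam_hi]; a cluster value lam of these lies in
   the closures of E_0 and E_c.  The moment condition of F^oo turns the integral
   of f(s)(1-2s)/s over (slo, x) into minus the tail integral over (x, shi), so
   G_f(lam, c) only involves tails at m(lam, c) and mm(lam, c).  Since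
   lam_lo > 0, these points stay away from the singularity of (1-2s)/s at 0, so
   the tails are Lipschitz in lam and move by O(|f - g|) with f; hence
   G_f(lam, c) is the limit of G_{g_k}(lam_k, c) = 0. *)

Section bounded_integral.
Context {R : realType}.
Local Notation mu := (@lebesgue_measure R).

Lemma bounded_itv_integrable {F : R -> R} {a b M : R} :
  measurable_fun `]a, b[ F -> (forall s, a < s < b -> `|F s| <= M) ->
  mu.-integrable `]a, b[ (EFin \o F).
Proof.
move=> mF bF; apply: measurable_bounded_integrable => //.
  by move: (lebesgue_measure_itv `]a, b[) => /= ->; case: ifP => _; rewrite ?ltry.
rewrite /bounded_near; near=> K => y /=; rewrite in_itv => /bF /le_trans; apply.
by near: K; apply: nbhs_pinfty_ge; exact: num_real.
Unshelve. all: by end_near.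
Qed.

Lemma bounded_itv_Rintegral_le {F : R -> R} {a b M : R} : a <= b ->
  measurable_fun `]a, b[ F -> (forall s, a < s < b -> `|F s| <= M) ->
  `|\int[mu]_(s in `]a, b[) F s| <= M * (b - a).
Proof.
move=> ab mF bF.
have normF_int : mu.-integrable `]a, b[ (EFin \o (Num.norm \o F)).
  apply: (@bounded_itv_integrable _ a b M) => [|s /bF]; first exact: measurableT_comp.
  by rewrite normr_id.
have cst_int : mu.-integrable `]a, b[ (EFin \o cst M).
  exact: (@bounded_itv_integrable _ a b `|M|).
have F_int := bounded_itv_integrable mF bF.
apply: le_trans (le_normr_Rintegral _ F_int) _ => //.
have -> : M * (b - a) = \int[mu]_(s in `]a, b[) M.
  rewrite Rintegral_cst //; move: (lebesgue_measure_itv `]a, b[) => /= ->.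
  rewrite lte_fin; by case: ltgtP ab => //= -> _; rewrite subrr mulr0.
exact: le_Rintegral.
Qed.

Lemma bounded_itv_Rintegral_split {F : R -> R} {a b x M : R} : a <= x <= b ->
  measurable_fun `]a, b[ F -> (forall s, a < s < b -> `|F s| <= M) ->
  \int[mu]_(s in `]a, b[) F s =
  \int[mu]_(s in `]a, x[) F s + \int[mu]_(s in `]x, b[) F s.
Proof.
move=> /andP[ax]; rewrite le_eqVlt => /predU1P[->|xb] mF bF.
  have -> : [set` `]b, b[] = set0 :> set R by rewrite set_itv_ge// bnd_simp ltxx.
  by rewrite [X in _ + X]/Rintegral integral_set0 addr0.
have iF := bounded_itv_integrable mF bF.
have := @Rintegral_itvB R F (BRight a) (BLeft b) x iF.
rewrite !bnd_simp => /(_ ax xb) <-.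
rewrite -Rintegral_itv_bndo_bndc; first by rewrite addrC subrK.
by apply: integrableS iF => //; apply: subset_itvl; rewrite bnd_simp ltW.
Qed.

Lemma bounded_itv_integral_cc {F : R -> R} {a b M : R} :
  measurable_fun `]a, b[ F -> (forall s, a < s < b -> `|F s| <= M) ->
  (\int[mu]_(s in `[a, b]) (F s)%:E = (\int[mu]_(s in `]a, b[) F s)%:E)%E.
Proof.
move=> mF bF; rewrite /Rintegral fineK; last first.
  exact: integrable_fin_num (bounded_itv_integrable mF bF).
by apply: (@integral_itv_bndoo R a b (EFin \o F) true false); exact/measurable_EFinP.
Qed.

End bounded_integral.

Lemma abs_weight_le_inv {R : realType} (x s : R) : 0 < x -> x < s -> s <= 1 ->
  `|(1 - 2 * s) / s| <= x^-1.
Proof.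
move=> x_gt0 xs s_le1; have s_gt0 : 0 < s by exact: lt_trans xs.
have num_le1 : `|1 - 2 * s| <= 1 by rewrite ler_norml; apply/andP; split; lra.
rewrite normrM normfV (gtr0_norm s_gt0) ler_pdivrMr// (le_trans num_le1)//.
by rewrite mulrC ler_pdivlMr// mul1r ltW.
Qed.

Section weighted_tail.
Context {R : realType}.
Local Notation mu := (@lebesgue_measure R).
Variables (slo shi : R).
Hypotheses (slo_ge0 : 0 <= slo) (shi_le1 : shi <= 1).

Definition weighted (f : R -> R) (s : R) : R := f s * ((1 - 2 * s) / s).

Definition tail (f : R -> R) (x : R) : R := \int[mu]_(s in `]x, shi[) weighted f s.

Let itv_neq0 s : slo < s -> s != 0.
Proof. by move=> /(le_lt_trans slo_ge0); rewrite lt0r => /andP[]. Qed.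

Lemma Finf_weighted_measurable {f} : Finf slo shi f ->
  measurable_fun `]slo, shi[ (weighted f).
Proof.
move=> [f_cont _]; apply: open_continuous_measurable_fun; first exact: interval_open.
move: f_cont; rewrite !continuous_open_subspace; try exact: interval_open.
move=> f_cont s s_in; apply: cvgM; first exact: f_cont.
apply: cvgM.
  by apply: cvgB; [exact: cvg_cst | apply: cvgM; [exact: cvg_cst | exact: cvg_id]].
apply: inv_continuous; apply: itv_neq0.
by move: s_in; rewrite inE /= in_itv /= => /andP[].
Qed.

Lemma Finf_weighted_bounded {f} : Finf slo shi f ->
  exists2 M : R, 0 <= M & forall s, slo < s < shi -> `|weighted f s| <= M.
Proof.
move=> [_ [[M0 fM0] [_ [_ [_ [M1 fM1]]]]]].
exists (`|M1| + `|M0|) => [|s s_in]; first by rewrite addr_ge0.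
have /itv_neq0 s_neq0 : slo < s by case/andP: s_in.
have -> : weighted f s = f s * ((1 - s) / s) - f s by rewrite /weighted; field.
apply: le_trans (ler_normB _ _) _.
by apply: lerD; apply: le_trans (ler_norm _); [exact: fM1 | exact: fM0].
Qed.

Let measurable_weighted_sub {f} {a b : R} : Finf slo shi f -> slo <= a -> b <= shi ->
  measurable_fun `]a, b[ (weighted f).
Proof.
move=> fI sa bs.
exact: measurable_funS (measurable_itv _) (subset_itvW false true sa bs)
  (Finf_weighted_measurable fI).
Qed.

Let bound_sub {P : R -> Prop} {a b : R} : (forall s, slo < s < shi -> P s) ->
  slo <= a -> b <= shi -> forall s, a < s < b -> P s.
Proof.
move=> HP sa bs s /andP[a_s sb]; apply: HP.
by rewrite (le_lt_trans sa a_s) (lt_le_trans sb bs).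
Qed.

Lemma Finf_tail_lipschitz {f} {M x y : R} : Finf slo shi f ->
  (forall s, slo < s < shi -> `|weighted f s| <= M) ->
  slo <= x <= shi -> slo <= y <= shi -> `|tail f x - tail f y| <= M * `|x - y|.
Proof.
wlog xy : x y / x <= y => [WLOG fI fM xI yI|].
  have [/WLOG|/ltW/WLOG] := leP x y; first exact.
  by rewrite distrC (distrC x); apply.
move=> fI fM /andP[slo_x _] /andP[_ y_shi].
rewrite [`|x - y|]distrC [`|y - x|]ger0_norm ?subr_ge0// /tail.
rewrite (bounded_itv_Rintegral_split (a := x) (x := y) (M := M)) ?xy//; last 2 first.
- exact: measurable_weighted_sub.
- exact: bound_sub fM slo_x (lexx _).
rewrite addrK bounded_itv_Rintegral_le//; first exact: measurable_weighted_sub.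
exact: bound_sub fM slo_x y_shi.
Qed.

Lemma Finf_tail_dist {f g} {e x : R} : Finf slo shi f -> Finf slo shi g -> 0 <= e ->
  (forall s, slo < s < shi -> `|f s - g s| <= e) -> 0 < x -> slo <= x <= shi ->
  `|tail f x - tail g x| <= e / x.
Proof.
move=> fI gI e_ge0 fg x_gt0 /andP[slo_x x_shi].
have [Mf _ fM] := Finf_weighted_bounded fI; have [Mg _ gM] := Finf_weighted_bounded gI.
have mf := measurable_weighted_sub fI slo_x (lexx shi).
have mg := measurable_weighted_sub gI slo_x (lexx shi).
rewrite /tail -RintegralB //; last 2 first.
- exact: bounded_itv_integrable mf (bound_sub fM slo_x (lexx _)).
- exact: bounded_itv_integrable mg (bound_sub gM slo_x (lexx _)).
have ex_ge0 : 0 <= e / x by exact: divr_ge0 e_ge0 (ltW x_gt0).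
apply: le_trans (bounded_itv_Rintegral_le (M := e / x) x_shi _ _) _.
- exact: measurable_funB.
- move=> s /andP[xs s_shi]; rewrite /weighted -mulrBl normrM.
  apply: ler_pM => //; first by apply: fg; rewrite (le_lt_trans slo_x xs) s_shi.
  exact: abs_weight_le_inv x_gt0 xs (le_trans (ltW s_shi) shi_le1).
rewrite -[leRHS]mulr1; apply: ler_wpM2l => //.
by rewrite lerBlDr (le_trans shi_le1)// lerDl ltW.
Qed.

Lemma Finf_tail_stability {f g} {M e x y d : R} : Finf slo shi f -> Finf slo shi g ->
  (forall s, slo < s < shi -> `|weighted f s| <= M) -> 0 <= e ->
  (forall s, slo < s < shi -> `|f s - g s| <= e) ->
  slo <= x <= shi -> slo <= y <= shi -> 0 < d <= y ->
  `|tail f x - tail g y| <= M * `|x - y| + e / d.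
Proof.
move=> fI gI fM e_ge0 fg x_in y_in /andP[d_gt0 dy].
apply: le_trans (ler_distD (tail f y) _ _) _; apply: lerD.
  exact: Finf_tail_lipschitz.
apply: le_trans (Finf_tail_dist fI gI e_ge0 fg (lt_le_trans d_gt0 dy) y_in) _.
by rewrite ler_wpM2l// lef_pV2 ?posrE// (lt_le_trans d_gt0).
Qed.

Let Rintegral_head_opp_tail f x : Finf slo shi f -> slo <= x <= shi ->
  \int[mu]_(s in `]slo, x[) weighted f s = - tail f x.
Proof.
move=> fI x_in; have [M _ fM] := Finf_weighted_bounded fI.
apply/eqP; rewrite -addr_eq0 /tail.
rewrite -(bounded_itv_Rintegral_split x_in (Finf_weighted_measurable fI) fM).
by case: fI => _ [_ [total _]]; rewrite /Rintegral total.
Qed.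

Definition Gtail (p : R) f (x y : R) : R := (1 - p) * tail f y - p * tail f x.

Lemma Finf_Gf_tail p u v {f} (lam c : R) : Finf slo shi f ->
  slo <= Defs.mfun u lam c <= shi -> slo <= Defs.mmfun v lam c <= shi ->
  Gf slo shi p u v f lam c =
  (Gtail p f (Defs.mfun u lam c) (Defs.mmfun v lam c))%:E.
Proof.
move=> fI /andP[slo_m m_shi] /andP[slo_mm mm_shi].
have [M _ fM] := Finf_weighted_bounded fI.
rewrite /Gf (bounded_itv_integral_cc (measurable_weighted_sub fI (lexx _) m_shi)
  (bound_sub fM (lexx _) m_shi)).
rewrite (bounded_itv_integral_cc (measurable_weighted_sub fI slo_mm (lexx _))
  (bound_sub fM slo_mm (lexx _))).
by rewrite Rintegral_head_opp_tail ?slo_m//; congr (_%:E); rewrite /Gtail /tail; ring.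
Qed.

Lemma Finf_Gtail_stability {f g} {p M e x1 y1 x2 y2 d1 d2 : R} : 0 <= p <= 1 ->
  Finf slo shi f -> Finf slo shi g ->
  (forall s, slo < s < shi -> `|weighted f s| <= M) -> 0 <= e ->
  (forall s, slo < s < shi -> `|f s - g s| <= e) ->
  slo <= x1 <= shi -> slo <= y1 <= shi -> slo <= x2 <= shi -> slo <= y2 <= shi ->
  0 < d1 <= x2 -> 0 < d2 <= y2 ->
  `|Gtail p f x1 y1 - Gtail p g x2 y2| <=
    M * (`|x1 - x2| + `|y1 - y2|) + e * (d1^-1 + d2^-1).
Proof.
move=> /andP[p_ge0 p_le1] fI gI fM e_ge0 fg x1_in y1_in x2_in y2_in d1_in d2_in.
have -> : Gtail p f x1 y1 - Gtail p g x2 y2 =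
    (1 - p) * (tail f y1 - tail g y2) - p * (tail f x1 - tail g x2).
  by rewrite /Gtail; ring.
have -> : M * (`|x1 - x2| + `|y1 - y2|) + e * (d1^-1 + d2^-1) =
    (M * `|y1 - y2| + e / d2) + (M * `|x1 - x2| + e / d1) by ring.
apply: le_trans (ler_normB _ _) _; rewrite !normrM (ger0_norm p_ge0) ger0_norm ?subr_ge0//.
apply: lerD; apply: le_trans (ler_piMl (normr_ge0 _) _) _.
- by rewrite lerBlDr lerDl.
- exact: Finf_tail_stability.
- exact: p_le1.
- exact: Finf_tail_stability.
Qed.

End weighted_tail.

(* [Defs.mfun u lam c] and [Defs.mmfun v lam c] are [lam * a / (lam * a + b)]
   with (a, b) = (1 + c, u - c) and (1 - c, v + c) respectively. *)
Section ratio.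
Context {R : realFieldType}.
Variables (a b : R).
Hypotheses (a_ge0 : 0 <= a) (b_gt0 : 0 < b).

Let den_gt0 {l : R} : 0 <= l -> 0 < l * a + b.
Proof. by move=> l_ge0; rewrite ltr_wpDl ?mulr_ge0. Qed.

Lemma ratio_lipschitz (l l' : R) : 0 <= l -> 0 <= l' ->
  `|l * a / (l * a + b) - l' * a / (l' * a + b)| <= a / b * `|l - l'|.
Proof.
move=> l_ge0 l'_ge0; have d_gt0 := den_gt0 l_ge0; have d'_gt0 := den_gt0 l'_ge0.
have -> : l * a / (l * a + b) - l' * a / (l' * a + b) =
    (l - l') * (a * b / ((l * a + b) * (l' * a + b))).
  by field; rewrite !gt_eqF.
have D_gt0 : 0 < (l * a + b) * (l' * a + b) by rewrite mulr_gt0.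
rewrite normrM mulrC ger0_norm; last first.
  exact: divr_ge0 (mulr_ge0 a_ge0 (ltW b_gt0)) (ltW D_gt0).
apply: ler_wpM2r => //; rewrite ler_pdivrMr// mulrAC ler_pdivlMr//.
rewrite -subr_ge0.
have -> : a * ((l * a + b) * (l' * a + b)) - a * b * b =
    a * (l * a * (l' * a) + b * (l * a) + b * (l' * a)) by ring.
by rewrite !(mulr_ge0, addr_ge0) // ltW.
Qed.

Lemma ratio_le (l l' : R) : 0 <= l -> l <= l' ->
  l * a / (l * a + b) <= l' * a / (l' * a + b).
Proof.
move=> l_ge0 ll'; have d_gt0 := den_gt0 l_ge0.
have d'_gt0 := den_gt0 (le_trans l_ge0 ll').
rewrite ler_pdivrMr// mulrAC ler_pdivlMr// -subr_ge0.
have -> : l' * a * (l * a + b) - l * a * (l' * a + b) = a * b * (l' - l) by ring.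
by rewrite !mulr_ge0 ?subr_ge0// ltW.
Qed.

Lemma ratio_gt0 (l : R) : 0 < a -> 0 < l -> 0 < l * a / (l * a + b).
Proof. by move=> a_gt0 l_gt0; rewrite divr_gt0 ?mulr_gt0 ?den_gt0 ?ltW. Qed.

End ratio.

Section cluster_values.
Context {R : realType}.
Implicit Types (b : nat -> R) (L : R).

Let mul_div_succ_le {K e : R} : 0 <= K -> 0 <= e -> K * (e / (K + 1)) <= e.
Proof.
move=> K_ge0 e_ge0; rewrite mulrA ler_pdivrMr ?ltr_wpDl// [K * e]mulrC.
by rewrite ler_wpM2l// lerDl.
Qed.

Lemma cluster_itv {b} {lo hi : R} : (forall n, lo <= b n <= hi) ->
  exists2 L, lo <= L <= hi & cluster (b @ \oo) L.
Proof.
move=> b_in; have b_itv : (b @ \oo) [set` `[lo, hi]].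
  by exists 0%N => // n _; rewrite /= in_itv b_in.
have [L [L_in bL]] := @segment_compact R lo hi (b @ \oo) _ b_itv.
by exists L; first by move: L_in; rewrite /= in_itv.
Qed.

Lemma cluster_closure {T : topologicalType} {E : set T} {b : nat -> T} {L : T} :
  (forall n, E (b n)) -> cluster (b @ \oo) L -> closure E L.
Proof. by move=> bE bL B LB; apply: (bL E B) => //; exists 0%N => // n _; exact: bE. Qed.

Lemma cluster_closed {T : topologicalType} {A : set T} {b : nat -> T} {L : T} :
  closed A -> (forall n, A (b n)) -> cluster (b @ \oo) L -> A L.
Proof. by move=> /closure_id AE bA bL; rewrite AE; exact: cluster_closure bA bL. Qed.

Lemma cluster_lipschitz (h : R -> R) (K : R) b L : 0 <= K ->
  (forall n, `|h L - h (b n)| <= K * `|L - b n|) ->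
  cluster (b @ \oo) L -> cluster ((h \o b) @ \oo) (h L).
Proof.
move=> K_ge0 hK /cluster_eventuallyP bL; apply/cluster_eventuallyP => e n e_gt0.
have [m nm Lm] := bL (e / (K + 1)) n (divr_gt0 e_gt0 (ltr_wpDl K_ge0 ltr01)).
exists m => //; apply: le_trans (hK m) _.
apply: le_trans (mul_div_succ_le K_ge0 (ltW e_gt0)); exact: ler_wpM2l.
Qed.

Lemma cluster_eq0 (z A B : R) b L : 0 <= A -> 0 <= B -> cluster (b @ \oo) L ->
  (forall n, `|z| <= A * `|L - b n| + B / n.+1%:R) -> z = 0.
Proof.
move=> A_ge0 B_ge0 /cluster_eventuallyP bL zle; apply/eqP; rewrite -normr_le0.
apply/ler_addgt0Pr => e e_gt0; rewrite add0r.
have e2_gt0 : 0 < e / 2 by rewrite divr_gt0.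
pose N := Num.bound (B / (e / 2)).
have [n Nn Ln] := bL (e / 2 / (A + 1)) N (divr_gt0 e2_gt0 (ltr_wpDl A_ge0 ltr01)).
have BN : B / n.+1%:R <= e / 2.
  have := archi_boundP (divr_ge0 B_ge0 (ltW e2_gt0)); rewrite -/N ltr_pdivrMr// => BN.
  rewrite ler_pdivrMr ?ltr0n// (le_trans (ltW BN))// mulrC ler_pM2l// ler_nat.
  exact: leqW.
have AL : A * `|L - b n| <= e / 2.
  apply: le_trans (mul_div_succ_le A_ge0 (ltW e2_gt0)); exact: ler_wpM2l.
by apply: le_trans (zle n) _; rewrite [leRHS]splitr lerD.
Qed.

End cluster_values.

Lemma ratio_cluster_itv {R : realType} (a b lo hi L : R) (lam : nat -> R) :
  0 <= a -> 0 < b -> (forall n, 0 <= lam n) -> 0 <= L ->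
  (forall n, lo < lam n * a / (lam n * a + b) < hi) -> cluster (lam @ \oo) L ->
  lo <= L * a / (L * a + b) <= hi.
Proof.
move=> a_ge0 b_gt0 lam_ge0 L_ge0 lam_in lamL.
have K_ge0 : 0 <= a / b by exact: divr_ge0 a_ge0 (ltW b_gt0).
have itv_closed : closed [set` `[lo, hi]] by exact: interval_closed.
suff : [set` `[lo, hi]] (L * a / (L * a + b)) by rewrite /= in_itv.
apply: (cluster_closed itv_closed _
  (@cluster_lipschitz R (fun l => l * a / (l * a + b)) _ _ _ K_ge0 _ lamL)) => n.
  by rewrite /= in_itv /=; have /andP[/ltW -> /ltW ->] := lam_in n.
exact: ratio_lipschitz.
Qed.

Lemma lim_sup_set_ge {d} {T : measurableType d} {R : realType}
    (mu : {measure set T -> \bar R}) (F : (set T)^nat) (B : set T) (a : \bar R) :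
  (forall k, measurable (F k)) -> measurable B -> (mu B < +oo)%E ->
  (forall k, F k `<=` B) -> (forall k, a <= mu (F k))%E ->
  (a <= mu (lim_sup_set F))%E.
Proof.
move=> mF mB muB FB aF.
have mUF n : measurable (\bigcup_(k in [set k | (n <= k)%N]) F k).
  by apply: bigcup_measurable => k _; exact: mF.
have UF_fin : (mu (\bigcup_(k >= 0) F k) < +oo)%E.
  apply: le_lt_trans muB; apply: le_measure; rewrite ?inE//.
  by move=> x [k _]; exact: FB.
rewrite -(cvg_lim _ (lim_sup_set_cvg mu F mF UF_fin))//.
apply: lime_ge; first by apply/cvg_ex; eexists; exact: lim_sup_set_cvg.
apply: nearW => n /=; apply: le_trans (aF n) _.
by apply: le_measure; rewrite ?inE//; move=> x Fx; exists n => /=.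
Qed.

Section Gf_limit.
Context {R : realType}.
Variables (slo shi p u v : R).
Hypotheses (slo_ge0 : 0 <= slo) (shi_le1 : shi <= 1) (p_in : 0 <= p <= 1).

Lemma Gf_cluster_eq0 (c lo L : R) f (g : nat -> R -> R) (lam : nat -> R) :
  -1 < c < u -> -v < c < 1 -> 0 < lo -> lo <= L ->
  Finf slo shi f -> (forall n, Finf slo shi (g n)) ->
  (forall n s, slo < s < shi -> `|f s - g n s| <= n.+1%:R^-1) ->
  (forall n, lo <= lam n /\ Eset slo shi u v c (lam n) /\
     Gf slo shi p u v (g n) (lam n) c = 0%E) ->
  cluster (lam @ \oo) L -> Gf slo shi p u v f L c = 0%E.
Proof.
move=> /andP[c_gtN1 c_ltu] /andP[c_gtNv c_lt1] lo_gt0 loL fI gI fg sol lamL.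
have [a1_gt0 b1_gt0] : 0 < 1 + c /\ 0 < u - c by split; lra.
have [a2_gt0 b2_gt0] : 0 < 1 - c /\ 0 < v + c by split; lra.
have lam_ge0 n : 0 <= lam n by have [/(lt_le_trans lo_gt0)/ltW] := sol n.
have L_ge0 : 0 <= L by exact: ltW (lt_le_trans lo_gt0 loL).
have m_in : slo <= Defs.mfun u L c <= shi.
  apply: ratio_cluster_itv (ltW a1_gt0) b1_gt0 lam_ge0 L_ge0 _ lamL => n.
  by have [_ [[_ [? _]] _]] := sol n.
have mm_in : slo <= Defs.mmfun v L c <= shi.
  apply: ratio_cluster_itv (ltW a2_gt0) b2_gt0 lam_ge0 L_ge0 _ lamL => n.
  by have [_ [[_ [_ ?]] _]] := sol n.
have [M M_ge0 fM] := Finf_weighted_bounded _ _ slo_ge0 fI.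
rewrite Finf_Gf_tail //; congr EFin.
pose d1 := Defs.mfun u lo c; pose d2 := Defs.mmfun v lo c.
have [d1_gt0 d2_gt0] : 0 < d1 /\ 0 < d2.
  by split; apply: ratio_gt0; rewrite ?ltW.
pose K := (1 + c) / (u - c) + (1 - c) / (v + c).
apply: (@cluster_eq0 _ _ (M * K) (d1^-1 + d2^-1) _ _ _ _ lamL) => [||n].
- by rewrite mulr_ge0// addr_ge0// divr_ge0// ltW.
- by rewrite addr_ge0// invr_ge0 ltW.
have [lo_lam [[_ [/andP[m_gt m_lt] /andP[mm_gt mm_lt]]] Gn]] := sol n.
rewrite Finf_Gf_tail ?(ltW m_gt) ?(ltW m_lt) ?(ltW mm_gt) ?(ltW mm_lt)// in Gn.
case: Gn => Gn; rewrite -[Gtail _ _ _ _ _]subr0 -Gn.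
apply: le_trans (Finf_Gtail_stability _ _ slo_ge0 shi_le1 (d1 := d1) (d2 := d2)
  p_in fI (gI n) fM _ (fg n) m_in mm_in _ _ _ _) _.
- by rewrite invr_ge0.
- by rewrite !ltW.
- by rewrite !ltW.
- by rewrite d1_gt0; apply: ratio_le => //; exact: ltW.
- by rewrite d2_gt0; apply: ratio_le => //; exact: ltW.
rewrite [_ * (d1^-1 + _)]mulrC lerD// -mulrA; apply: ler_wpM2l => //.
by rewrite /K mulrDl; apply: lerD; apply: ratio_lipschitz => //; exact: ltW.
Qed.

End Gf_limit.

Lemma lam_lo_gt0 {R : realType} {slo shi u v eps0 c : R} :
  0 < eps0 -> Ceps slo shi u v eps0 c -> 0 < lam_lo slo shi u v eps0.
Proof.
move=> eps0_gt0 Cc; set C := Ceps slo shi u v eps0.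
have C_bnd c' : C c' -> -1 + eps0 < c' < u - eps0 /\ - v + eps0 < c' < 1 - eps0 by case.
have supC : sup C <= u - eps0.
  by apply: ge_sup; [exists c | move=> c' /C_bnd[/andP[_ /ltW]]].
have infC : - v + eps0 <= inf C.
  by apply: lb_le_inf; [exists c | move=> c' /C_bnd[_ /andP[/ltW]]].
have c_le_sup : c <= sup C.
  by apply: ub_le_sup => //; exists (u - eps0) => c' /C_bnd[/andP[_ /ltW]].
have inf_le_c : inf C <= c.
  by apply: ge_inf => //; exists (- v + eps0) => c' /C_bnd[_ /andP[/ltW]].
have [/andP[? ?] /andP[? ?]] := C_bnd c Cc.
by rewrite /lam_lo -/C lt_min; apply/andP; split; apply: divr_gt0; lra.
Qed.

Section closure_Fn.
Context {R : realType}.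
Variables (slo shi p u v eps0 : R) (n : nat).
Hypotheses (slo_ge0 : 0 <= slo) (shi_le1 : shi <= 1) (p_in : 0 <= p <= 1).
Hypotheses (u_gt0 : 0 < u) (v_gt0 : 0 < v) (eps0_gt0 : 0 < eps0).
Local Notation mu := (@lebesgue_measure R).

Definition Gf_common_zero (g : R -> R) (c lam : R) : Prop :=
  Eset slo shi u v 0 lam /\ Eset slo shi u v c lam /\
  lam_lo slo shi u v eps0 <= lam <= lam_hi slo shi u v eps0 /\
  Gf slo shi p u v g lam 0 = 0%E /\ Gf slo shi p u v g lam c = 0%E.

Lemma Fn_closure_seq f : Fn_closure slo shi p u v eps0 n f ->
  exists (g : nat -> R -> R) (S : nat -> set R), forall k,
    Finf slo shi (g k) /\ (forall s, slo < s < shi -> `|f s - g k s| <= k.+1%:R^-1) /\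
    measurable (S k) /\ S k `<=` Ceps slo shi u v eps0 /\
    ((n%:R)^-1%:E <= mu (S k))%E /\
    forall c, S k c -> exists lam, Gf_common_zero (g k) c lam.
Proof.
move=> [_ f_approx].
have inv_gt0 k : 0 < k.+1%:R^-1 :> R by rewrite invr_gt0 ltr0n.
have /choice[g gP] := fun k => f_approx _ (inv_gt0 k).
have /choice[S SP] := fun k => (gP k).1.2.
by exists g, S => k; have [[gI _] fg] := gP k; have [? [? [? ?]]] := SP k.
Qed.

Lemma lim_sup_common_zero f (g : nat -> R -> R) (S : nat -> set R) c :
  Finf slo shi f -> (forall k, Finf slo shi (g k)) ->
  (forall k s, slo < s < shi -> `|f s - g k s| <= k.+1%:R^-1) ->
  Ceps slo shi u v eps0 c ->
  (forall k, S k c -> exists lam, Gf_common_zero (g k) c lam) ->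
  lim_sup_set S c ->
  exists lam, closure (Eset slo shi u v 0) lam /\ closure (Eset slo shi u v c) lam /\
    lam_lo slo shi u v eps0 <= lam <= lam_hi slo shi u v eps0 /\
    Gf slo shi p u v f lam 0 = 0%E /\ Gf slo shi p u v f lam c = 0%E.
Proof.
move=> fI gI fg Cc Sg Sc.
have /choice[kk kkP] : forall N, exists k, (N <= k)%N /\ S k c.
  by move=> N; have [k /= Nk Skc] := Sc N I; exists k.
have /choice[lam lamP] := fun N => Sg _ (kkP N).2.
have [L /andP[loL L_hi] lamL] := cluster_itv (fun N => (lamP N).2.2.1).
have lo_gt0 := lam_lo_gt0 eps0_gt0 Cc.
have fgk N s : slo < s < shi -> `|f s - g (kk N) s| <= N.+1%:R^-1.
  move=> /(fg (kk N)) /le_trans; apply.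
  by rewrite lef_pV2 ?posrE// ler_nat ltnS (kkP N).1.
have [[/andP[c_gtN1 c_ltu] [/andP[c_gtNv c_lt1] _]] _] := Cc.
exists L; split; first exact: cluster_closure (fun N => (lamP N).1) lamL.
split; first exact: cluster_closure (fun N => (lamP N).2.1) lamL.
split; first by rewrite loL L_hi.
have Gf0 c' : -1 < c' < u -> -v < c' < 1 ->
    (forall N, Eset slo shi u v c' (lam N) /\ Gf slo shi p u v (g (kk N)) (lam N) c' = 0%E) ->
    Gf slo shi p u v f L c' = 0%E.
  move=> c'1 c'2 sol.
  apply: Gf_cluster_eq0 c'1 c'2 lo_gt0 loL fI (fun N => gI (kk N)) fgk _ lamL => //.
  by move=> N; have [? ?] := sol N; have [_ [_ [/andP[? _] _]]] := lamP N.
split; apply: Gf0; rewrite ?c_gtN1 ?c_ltu ?c_gtNv ?c_lt1 //.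
- by rewrite ltrN10 u_gt0.
- by rewrite oppr_lt0 v_gt0 ltr01.
- by move=> N; have [? [_ [_ [? _]]]] := lamP N.
- by move=> N; have [_ [? [_ [_ ?]]]] := lamP N.
Qed.

End closure_Fn.

Theorem proposition12 (R : realType) (slo shi p u v eps0 : R) (n : nat)
  (Hslo : 0 <= slo) (Hs : slo < shi) (Hshi : shi <= 1)
  (Hends : slo = 0 \/ shi = 1)
  (Hp : 0 < p < 1) (Hu : 0 < u) (Hv : 0 < v) (Huv : u != v)
  (HE0 : Eset slo shi u v 0 !=set0)
  (Heps : 0 < eps0) (Hn : (0 < n)%N)
  (f : R -> R) :
  Fn_closure slo shi p u v eps0 n f ->
  exists S : set R, measurable S /\ S `<=` Ceps slo shi u v eps0 /\
    ((n%:R)^-1%:E <= lebesgue_measure S)%E /\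
    forall c, S c -> exists lam,
      closure (Eset slo shi u v 0) lam /\ closure (Eset slo shi u v c) lam /\
      lam_lo slo shi u v eps0 <= lam <= lam_hi slo shi u v eps0 /\
      Gf slo shi p u v f lam 0 = 0%E /\ Gf slo shi p u v f lam c = 0%E.
Proof.
move=> fcl; have fI := fcl.1; have [g [S gS]] := Fn_closure_seq _ _ _ _ _ _ _ _ fcl.
have p_in : 0 <= p <= 1 by case/andP: Hp => ? ?; rewrite !ltW.
have SC k : S k `<=` Ceps slo shi u v eps0 by have [_ [_ [_ []]]] := gS k.
have mS k : measurable (S k) by have [_ [_ []]] := gS k.
exists (lim_sup_set S); split; [|split; [|split]].
- by apply: bigcap_measurable => [|N _]; [exists 0%N | exact: bigcup_measurable].
- by move=> c Sc; have [k _ /SC] := Sc 0%N I.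
- apply: (@lim_sup_set_ge _ _ _ (@lebesgue_measure R) S `]-1, 1[) => // [|k c|k].
  + by move: (@lebesgue_measure_itv R `]-1, 1[) => /= ->; case: ifP => _; rewrite ?ltry.
  + by move=> /SC[[/andP[c_gtN1 _] [/andP[_ c_lt1] _]] _]; rewrite /= in_itv /= c_gtN1.
  + by have [_ [_ [_ [_ []]]]] := gS k.
move=> c Sc.
apply: (lim_sup_common_zero _ _ _ _ _ _ Hslo Hshi p_in Hu Hv Heps f g S c fI _ _ _ _ Sc).
- by move=> k; have [] := gS k.
- by move=> k; have [_ []] := gS k.
- by have [k _ /SC] := Sc 0%N I.
- by move=> k; have [_ [_ [_ [_ [_ /(_ c)]]]]] := gS k.
Qed.
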